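(* Under the hypotheses of the two-shock setting ($v_\pm>0$, $u_->u_+$, intermediate state $(u_*^{\epsilon_1\epsilon_2},v_*^{\epsilon_1\epsilon_2})$), $$\lim_{\epsilon_1,\epsilon_2\to0}2\sqrt{\epsilon_1}\,v_*^{\epsilon_1\epsilon_2}=\frac{u_--u_+}{2}.$$
   Context: Perturbed Brio system: $u_t+(\tfrac12u^2+\tfrac12\epsilon_1v^2)_x=0$, $v_t+(uv-\epsilon_2v)_x=0$, $\epsilon_1,\epsilon_2>0$, $v>0$, with Riemann data $(u_-,v_-)$ for $x<0$, $(u_+,v_+)$ for $x>0$. A two-shock Riemann solution is one with an intermediate state $(u_*,v_* )$, $v_*>\max(v_-,v_+)$, $u_+<u_*<u_-$, such that $$u_*=u_-+(v_*-v_-)\frac{\epsilon_2-\sqrt{\epsilon_2^2+4\epsilon_1(v_*+v_-)^2}}{v_*+v_-},\qquad u_+=u_*+(v_+-v_* )\frac{\epsilon_2+\sqrt{\epsilon_2^2+4\epsilon_1(v_*+v_+)^2}}{v_*+v_+},$$ with shock speeds $\sigma_1=u_-+\frac{v_*(u_*-u_-)}{v_*-v_-}-\epsilon_2$ and $\sigma_2=u_++\frac{v_*(u_+-u_* )}{v_+-v_*}-\epsilon_2$. The limit is taken over parameters for which this solution exists. *)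

From Stdlib Require Import Reals.
Open Scope R_scope.

(* (us, vs) is the intermediate state of a two-shock Riemann solution of the
   perturbed Brio system with parameters e1 = epsilon_1, e2 = epsilon_2 and
   Riemann data (um, vm) (left) and (up, vp) (right). *)
Definition two_shock_state (e1 e2 um vm up vp us vs : R) : Prop :=
  vs > Rmax vm vp /\
  up < us < um /\
  us = um + (vs - vm) * ((e2 - sqrt (e2 ^ 2 + 4 * e1 * (vs + vm) ^ 2)) / (vs + vm)) /\
  up = us + (vp - vs) * ((e2 + sqrt (e2 ^ 2 + 4 * e1 * (vs + vp) ^ 2)) / (vs + vp)).

Definition sigma1 (e2 um vm us vs : R) : R := um + vs * (us - um) / (vs - vm) - e2.
Definition sigma2 (e2 up vp us vs : R) : R := up + vs * (up - us) / (vp - vs) - e2.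

From Stdlib Require Import Reals Lra Psatz.
Open Scope R_scope.

(* Write s = sqrt e1.  Each shock relation expresses the jump of u
   across a shock as a multiple of a square root sqrt (e2^2 + 4 e1 w^2), which
   lies between 2 s w and e2 + 2 s w.  Hence the jump across the 1-shock is
   -2 s (v_* - v_-) up to an error in [0, e2], and the jump across the
   2-shock is -2 s (v_* - v_+) up to an error in [-2 e2, 0].  Adding both,
   u_- - u_+ = 2 s (2 v_* - v_- - v_+) + O(e2), which gives the explicit
   estimate  |2 s v_* - (u_- - u_+)/2| <= s (v_- + v_+) + e2
   (lemma [two_shock_state_estimate]). *)

Lemma sqrt_shock_bounds (e1 e2 w : R) :
  0 <= e1 -> 0 <= e2 -> 0 <= w ->
  2 * sqrt e1 * w <= sqrt (e2 ^ 2 + 4 * e1 * w ^ 2) <= e2 + 2 * sqrt e1 * w.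
Proof.
  intros He1 He2 Hw.
  set (s := sqrt e1).
  assert (Hs : 0 <= s) by apply sqrt_pos.
  assert (Hss : e1 = s * s) by (symmetry; apply sqrt_sqrt; lra).
  rewrite Hss.
  assert (Hsw : 0 <= 2 * s * w) by (apply Rmult_le_pos; lra).
  split.
  - rewrite <- (sqrt_pow2 (2 * s * w)) by exact Hsw.
    apply sqrt_le_1_alt. nra.
  - rewrite <- (sqrt_pow2 (e2 + 2 * s * w)) by lra.
    apply sqrt_le_1_alt. nra.
Qed.

Lemma one_shock_jump_bounds (e1 e2 v0 v : R) :
  0 <= e1 -> 0 <= e2 -> 0 <= v0 -> v0 < v ->
  forall J, J = (v - v0) * ((e2 - sqrt (e2 ^ 2 + 4 * e1 * (v + v0) ^ 2)) / (v + v0)) ->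
  - 2 * sqrt e1 * (v - v0) <= J <= - 2 * sqrt e1 * (v - v0) + e2.
Proof.
  intros He1 He2 Hv0 Hv J HJdef.
  destruct (sqrt_shock_bounds e1 e2 (v + v0) He1 He2) as [Slo Shi]; [lra|].
  set (S := sqrt (e2 ^ 2 + 4 * e1 * (v + v0) ^ 2)) in *.
  set (s := sqrt e1) in *.
  assert (HJ : J * (v + v0) = (v - v0) * (e2 - S)) by (rewrite HJdef; field; lra).
  assert (Hgap_hi : 0 <= (v - v0) * (e2 + 2 * s * (v + v0) - S)) by (apply Rmult_le_pos; lra).
  assert (Hgap_lo : 0 <= (v - v0) * (S - 2 * s * (v + v0))) by (apply Rmult_le_pos; lra).
  assert (He2v0 : 0 <= e2 * v0) by (apply Rmult_le_pos; lra).
  split; apply (Rmult_le_reg_r (v + v0)); try lra; rewrite HJ; nra.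
Qed.

Lemma two_shock_jump_bounds (e1 e2 v0 v : R) :
  0 <= e1 -> 0 <= e2 -> 0 <= v0 -> v0 < v ->
  forall J, J = (v0 - v) * ((e2 + sqrt (e2 ^ 2 + 4 * e1 * (v + v0) ^ 2)) / (v + v0)) ->
  - 2 * sqrt e1 * (v - v0) - 2 * e2 <= J <= - 2 * sqrt e1 * (v - v0).
Proof.
  intros He1 He2 Hv0 Hv J HJdef.
  destruct (sqrt_shock_bounds e1 e2 (v + v0) He1 He2) as [Slo Shi]; [lra|].
  set (S := sqrt (e2 ^ 2 + 4 * e1 * (v + v0) ^ 2)) in *.
  set (s := sqrt e1) in *.
  assert (HJ : J * (v + v0) = (v0 - v) * (e2 + S)) by (rewrite HJdef; field; lra).
  assert (Hgap_hi : 0 <= (v - v0) * (e2 + 2 * s * (v + v0) - S)) by (apply Rmult_le_pos; lra).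
  assert (Hgap_lo : 0 <= (v - v0) * (S - 2 * s * (v + v0))) by (apply Rmult_le_pos; lra).
  assert (He2v0 : 0 <= e2 * v0) by (apply Rmult_le_pos; lra).
  split; apply (Rmult_le_reg_r (v + v0)); try lra; rewrite HJ; nra.
Qed.

Lemma two_shock_state_estimate (e1 e2 um vm up vp us vs : R) :
  0 <= e1 -> 0 <= e2 -> 0 < vm -> 0 < vp ->
  two_shock_state e1 e2 um vm up vp us vs ->
  Rabs (2 * sqrt e1 * vs - (um - up) / 2) <= sqrt e1 * (vm + vp) + e2.
Proof.
  intros He1 He2 Hvm Hvp [Hmax [_ [Eus Eup]]].
  assert (Hvsm : vm < vs) by (eapply Rle_lt_trans; [apply Rmax_l | exact Hmax]).
  assert (Hvsp : vp < vs) by (eapply Rle_lt_trans; [apply Rmax_r | exact Hmax]).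
  assert (J1 := one_shock_jump_bounds e1 e2 vm vs He1 He2 ltac:(lra) Hvsm
                  (us - um) ltac:(lra)).
  assert (J2 := two_shock_jump_bounds e1 e2 vp vs He1 He2 ltac:(lra) Hvsp
                  (up - us) ltac:(lra)).
  assert (Hs : 0 <= sqrt e1 * (vm + vp)) by (apply Rmult_le_pos; [apply sqrt_pos | lra]).
  apply Rabs_le. split; lra.
Qed.

Theorem lemma5p2 (um vm up vp : R) :
  0 < vm -> 0 < vp -> up < um ->
  forall eta : R, eta > 0 ->
  exists delta : R, delta > 0 /\
    forall e1 e2 us vs : R,
      0 < e1 < delta -> 0 < e2 < delta ->
      two_shock_state e1 e2 um vm up vp us vs ->
      Rabs (2 * sqrt e1 * vs - (um - up) / 2) < eta.
Proof.
  intros Hvm Hvp _ eta Heta.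
  (* With k(vm + vp + 1) = eta, the choice delta = min(1, k^2) forces both
     sqrt e1 < k and e2 < k. *)
  set (k := eta / (vm + vp + 1)).
  assert (Hk : 0 < k) by (unfold k; apply Rdiv_lt_0_compat; lra).
  assert (Hketa : k * (vm + vp + 1) = eta) by (unfold k; field; lra).
  exists (Rmin 1 (k * k)). split; [apply Rmin_pos; nra|].
  intros e1 e2 us vs He1 He2 Hstate.
  pose proof (Rmin_l 1 (k * k)). pose proof (Rmin_r 1 (k * k)).
  assert (Hs : sqrt e1 < k).
  { rewrite <- (sqrt_square k) by lra. apply sqrt_lt_1_alt. lra. }
  assert (He2k : e2 < k) by (destruct (Rlt_le_dec k 1); nra).
  eapply Rle_lt_trans.
  - apply (two_shock_state_estimate e1 e2 um vm up vp us vs); lra || exact Hstate.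
  - nra.
Qed.
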